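(* Let $G$ be a group generated by $x_1,\dots,x_n$, with finite commutator subgroup $C=[G,G]$, such that $G/C$ is free abelian of rank $n$ with basis the images of $x_1,\dots,x_n$. Let $P=X\cap\mathcal C_G(C)$, where $X=\{g_{\mathbf m}\in T: c_{\,x_1^{m_1}\cdots x_{k-1}^{m_{k-1}},\,x_k}=e \text{ for all } k=1,\dots,n\}$ and $\mathcal C_G(C)$ is the centralizer of $C$ in $G$. If $p\in P$, then $t\,p=(t\,p)^{ab}$ for every $t\in T$; that is, $g_{\mathbf r}\,g_{\mathbf m}=g_{\mathbf r+\mathbf m}$ whenever $g_{\mathbf m}\in P$ and $\mathbf r\in\mathbb Z^n$.
   Context: Notation: $\bar g=g^{-1}$, $c_{gh}=\bar g\,\bar h\,g\,h$. For $\mathbf r\in\mathbb Z^n$, $g_{\mathbf r}=x_1^{r_1}\cdots x_n^{r_n}$, and $T=\{g_{\mathbf r}\}$. Every $g\in G$ decomposes uniquely as $g=g_{\mathbf r}c$ with $c\in C$, and $g^{ab}$ denotes the element $g_{\mathbf r}$ of this decomposition. *)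

(* an abstract (possibly infinite) group given by its carrier
   and operations, since MathComp's group theory only covers finite groups. *)
From Stdlib Require Import ZArith List.
Open Scope Z_scope.

Record Group := {
  car :> Type;
  gmul : car -> car -> car;
  ginv : car -> car;
  gone : car;
  gmulA : forall a b c, gmul a (gmul b c) = gmul (gmul a b) c;
  gmul1g : forall a, gmul gone a = a;
  gmulg1 : forall a, gmul a gone = a;
  gmulVg : forall a, gmul (ginv a) a = gone;
  gmulgV : forall a, gmul a (ginv a) = gone
}.

Section GroupDefs.
Variable G : Group.

Fixpoint gpow_nat (g : G) (k : nat) : G :=
  match k with O => gone G | S k' => gmul G (gpow_nat g k') g end.

Definition gpowZ (g : G) (k : Z) : G :=
  match k with
  | Z0 => gone G
  | Zpos p => gpow_nat g (Pos.to_nat p)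
  | Zneg p => gpow_nat (ginv G g) (Pos.to_nat p)
  end.

Definition comm (g h : G) : G :=
  gmul G (gmul G (gmul G (ginv G g) (ginv G h)) g) h.

(* The commutator subgroup C = [G,G]: finite products of commutators
   (closed under inverses since c_{gh}^{-1} = c_{hg}). *)
Inductive inC : G -> Prop :=
  | inC_one : inC (gone G)
  | inC_cons : forall g h y, inC y -> inC (gmul G (comm g h) y).

(* Generators x_1..x_n are indexed x 0, ..., x (n-1). *)
Inductive generated (n : nat) (x : nat -> G) : G -> Prop :=
  | gen_one : generated n x (gone G)
  | gen_x : forall i, (i < n)%nat -> generated n x (x i)
  | gen_mul : forall a b, generated n x a -> generated n x b ->
              generated n x (gmul G a b)
  | gen_inv : forall a, generated n x a -> generated n x (ginv G a).

Fixpoint gprefix (k : nat) (x : nat -> G) (r : nat -> Z) : G :=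
  match k with
  | O => gone G
  | S k' => gmul G (gprefix k' x r) (gpowZ (x k') (r k'))
  end.

(* g_r = x_1^{r_1} ... x_n^{r_n} (only r 0 .. r (n-1) matter) *)
Definition g_ (n : nat) (x : nat -> G) (r : nat -> Z) : G := gprefix n x r.

Definition finite_C : Prop := exists l : list G, forall c, inC c -> In c l.

(* G/C is free abelian with basis the images of x_1..x_n:
   every coset gC equals g_r C for a unique r in Z^n. *)
Definition free_abelian_basis_mod_C (n : nat) (x : nat -> G) : Prop :=
  (forall g, exists r : nat -> Z, inC (gmul G (ginv G (g_ n x r)) g)) /\
  (forall g (r r' : nat -> Z),
      inC (gmul G (ginv G (g_ n x r)) g) ->
      inC (gmul G (ginv G (g_ n x r')) g) ->
      forall i, (i < n)%nat -> r i = r' i).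

Definition in_centralizer_C (g : G) : Prop :=
  forall c, inC c -> gmul G g c = gmul G c g.

Definition inX (n : nat) (x : nat -> G) (g : G) : Prop :=
  exists m : nat -> Z, g = g_ n x m /\
    forall k, (k < n)%nat -> comm (gprefix k x m) (x k) = gone G.

Definition inP (n : nat) (x : nat -> G) (g : G) : Prop :=
  inX n x g /\ in_centralizer_C g.

End GroupDefs.

From Stdlib Require Import ZArith List Lia.

(* The witness condition of [X] says that each generator [x_k] commutes with
   the prefix [x_1^{m_1} ... x_{k-1}^{m_{k-1}}] of [p = g_m], hence with every
   power [x_k^{r_k}].  Multiplying [g_r] by [g_m] and moving, for k = n, ..., 1,
   the factor [x_k^{r_k}] rightwards past that prefix gives [g_{r+m}].  The [m]
   of the statement agrees with the witness of [X] by uniqueness of normal forms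
   modulo [C]. *)

Section GroupFacts.
Variable G : Group.
Local Notation "a * b" := (gmul G a b).
Local Notation "1" := (gone G).
Local Notation "a ^-1" := (ginv G a) (at level 3, format "a ^-1").

Definition commute (a b : G) : Prop := a * b = b * a.

Lemma mulIg (a b c : G) : a * c = b * c -> a = b.
Proof.
  intro H.
  rewrite <- (gmulg1 G a), <- (gmulg1 G b), <- (gmulgV G c), !gmulA, H.
  reflexivity.
Qed.

Lemma gpowZ_of_nat (g : G) (k : nat) : gpowZ G g (Z.of_nat k) = gpow_nat G g k.
Proof. destruct k; simpl; [|rewrite SuccNat2Pos.id_succ]; reflexivity. Qed.

Lemma gpowZ_opp_of_nat (g : G) (k : nat) :
  gpowZ G g (- Z.of_nat k) = gpow_nat G g^-1 k.
Proof. destruct k; simpl; [|rewrite SuccNat2Pos.id_succ]; reflexivity. Qed.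

Lemma gpowZ_succ (g : G) (z : Z) : gpowZ G g (z + 1) = gpowZ G g z * g.
Proof.
  destruct (Z_le_gt_dec 0 z) as [Hz | Hz].
  - rewrite <- (Z2Nat.id z) by exact Hz.
    replace (Z.of_nat (Z.to_nat z) + 1)%Z with (Z.of_nat (S (Z.to_nat z))) by lia.
    rewrite !gpowZ_of_nat. reflexivity.
  - destruct (Z_of_nat_complete_inf (- z - 1)) as [k Hk]; [lia|].
    replace z with (- Z.of_nat (S k))%Z by lia.
    replace (- Z.of_nat (S k) + 1)%Z with (- Z.of_nat k)%Z by lia.
    rewrite !gpowZ_opp_of_nat. simpl.
    rewrite <- gmulA, gmulVg, gmulg1. reflexivity.
Qed.

Lemma gpowZ_pred (g : G) (z : Z) : gpowZ G g (z - 1) = gpowZ G g z * g^-1.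
Proof.
  apply (mulIg _ _ g).
  rewrite <- gmulA, gmulVg, gmulg1, <- gpowZ_succ, Z.sub_add.
  reflexivity.
Qed.

Lemma gpowZ_add (g : G) (a b : Z) :
  gpowZ G g (a + b) = gpowZ G g a * gpowZ G g b.
Proof.
  induction b as [| b IH | b IH] using Z.peano_ind.
  - rewrite Z.add_0_r. simpl. rewrite gmulg1. reflexivity.
  - rewrite <- Z.add_1_r, Z.add_assoc, !gpowZ_succ, IH, gmulA. reflexivity.
  - rewrite <- Z.sub_1_r, Z.add_sub_assoc, !gpowZ_pred, IH, gmulA. reflexivity.
Qed.

Lemma commute_inv (a g : G) : commute a g -> commute a g^-1.
Proof.
  unfold commute. intro H. apply (mulIg _ _ g).
  rewrite <- gmulA, gmulVg, gmulg1, <- gmulA, H, gmulA, gmulVg, gmul1g.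
  reflexivity.
Qed.

Lemma commute_gpowZ (a g : G) (z : Z) : commute a g -> commute a (gpowZ G g z).
Proof.
  unfold commute. intro H.
  induction z as [| z IH | z IH] using Z.peano_ind.
  - simpl. rewrite gmulg1, gmul1g. reflexivity.
  - rewrite <- Z.add_1_r, gpowZ_succ, gmulA, IH, <- gmulA, H, gmulA.
    reflexivity.
  - rewrite <- Z.sub_1_r, gpowZ_pred, gmulA, IH, <- gmulA, (commute_inv _ _ H),
      gmulA.
    reflexivity.
Qed.

Lemma comm_eq1_commute (a g : G) : comm G a g = 1 -> commute a g.
Proof.
  unfold comm, commute. intro H.
  assert (E : (g * a) * (a^-1 * g^-1 * a * g) = g * a)
    by (rewrite H, gmulg1; reflexivity).
  rewrite <- E, !gmulA, <- (gmulA _ g a a^-1), gmulgV, gmulg1, gmulgV, gmul1g.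
  reflexivity.
Qed.

Section Prefixes.
Variable x : nat -> G.

Lemma gprefix_ext (k : nat) (a b : nat -> Z) :
  (forall i, (i < k)%nat -> a i = b i) -> gprefix G k x a = gprefix G k x b.
Proof.
  induction k as [| k IH]; intro Hab; simpl; [reflexivity|].
  rewrite IH by (intros; apply Hab; lia).
  rewrite Hab by lia. reflexivity.
Qed.

Lemma gprefix_mul (j : nat) (r m : nat -> Z) :
  (forall k, (k < j)%nat -> comm G (gprefix G k x m) (x k) = 1) ->
  gprefix G j x r * gprefix G j x m = gprefix G j x (fun i => (r i + m i)%Z).
Proof.
  induction j as [| j IH]; intro Hc; simpl.
  - apply gmulg1.
  - rewrite <- IH by (intros; apply Hc; lia).
    assert (Hcomm : commute (gprefix G j x m) (gpowZ G (x j) (r j)))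
      by (apply commute_gpowZ, comm_eq1_commute, Hc; lia).
    rewrite gpowZ_add, <- !gmulA. f_equal.
    rewrite !gmulA. f_equal. symmetry. exact Hcomm.
Qed.

Lemma g_exponents_unique (n : nat) (m m' : nat -> Z) :
  free_abelian_basis_mod_C G n x -> g_ G n x m = g_ G n x m' ->
  forall i, (i < n)%nat -> m i = m' i.
Proof.
  intros [_ Huniq] E.
  apply (Huniq (g_ G n x m)); [| rewrite E]; rewrite gmulVg; constructor.
Qed.

End Prefixes.
End GroupFacts.

Theorem lemma2 (G : Group) (n : nat) (x : nat -> G)
  (Hgen : forall g : G, generated G n x g)
  (Hfin : finite_C G)
  (Hfree : free_abelian_basis_mod_C G n x) :
  forall (p : G) (m : nat -> Z),
    inP G n x p -> p = g_ G n x m ->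
    forall r : nat -> Z,
      gmul G (g_ G n x r) p = g_ G n x (fun i => (r i + m i)%Z).
Proof.
  intros p m [[m' [Hpm' Hcomm]] _] Hpm r.
  assert (Hmm' : forall i, (i < n)%nat -> m i = m' i)
    by (apply (g_exponents_unique G x); congruence).
  rewrite Hpm. apply gprefix_mul.
  intros k Hk.
  rewrite (gprefix_ext G x k m m') by (intros; apply Hmm'; lia).
  exact (Hcomm k Hk).
Qed.
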